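(* Let $U$ be a random variable on a finite alphabet $\mathcal{U}$ such that $X-Y-U$ is a Markov chain (i.e. $P_{XYU}=P_{XY}P_{U|Y}$), and for $\epsilon>0$ define $J_u=\frac{1}{\epsilon}(P_{X|U=u}-P_X)$ for each $u$ with $P_U(u)>0$, and suppose $\{J_u\}$ satisfies (P1), (P2), (P3). Then, for sufficiently small $\epsilon>0$, for every such $u$ the vector $P_{Y|U=u}$ belongs to the convex polytope $\mathbb{S}_u=\{y\in\mathbb{R}^{|\mathcal{Y}|}: My=MP_Y+\epsilon M\begin{bmatrix}P_{X|Y_1}^{-1}J_u\\0\end{bmatrix},\ y\ge0\}$.
   Context: Setting: $X,Y$ on finite alphabets with $|\mathcal{X}|<|\mathcal{Y}|$, joint pmf $P_{XY}$, marginal vectors $P_X,P_Y$ with positive entries. $P_{X|Y}\in\mathbb{R}^{|\mathcal{X}|\times|\mathcal{Y}|}$ has full row rank and $P_{X|Y}=[P_{X|Y_1},P_{X|Y_2}]$ with $P_{X|Y_1}$ (first $|\mathcal{X}|$ columns) invertible. With an SVD $P_{X|Y}=U\Sigma V^T$, $V=[v_1,\dots,v_{|\mathcal{Y}|}]$, set $M=[v_1,\dots,v_{|\mathcal{X}|}]^T$. The zero block has size $|\mathcal{Y}|-|\mathcal{X}|$. Properties: (P1) $\sum_x J_u(x)=0$ for all $u$; (P2) $\sum_u P_U(u)J_u(x)=0$ for all $x$; (P3) $\sum_x|J_u(x)|\le1$ for all $u$. *)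

From HB Require Import structures.
From mathcomp Require Import all_boot all_order all_algebra.
Set Implicit Arguments. Unset Strict Implicit. Unset Printing Implicit Defensive.
Import Order.TTheory GRing.Theory Num.Theory.
Local Open Scope ring_scope.

(* Alphabets: X = 'I_n, Y = 'I_m, U = 'I_p.  Joint pmf P_XY as an n x m matrix. *)
Section Defs.
Variable R : realFieldType.

Definition is_joint_pmf n m (P : 'M[R]_(n, m)) : Prop :=
  (forall i j, 0 <= P i j) /\ \sum_i \sum_j P i j = 1.

Definition margX n m (P : 'M[R]_(n, m)) : 'cV[R]_n := \col_i \sum_j P i j.
Definition margY n m (P : 'M[R]_(n, m)) : 'cV[R]_m := \col_j \sum_i P i j.
Definition condXgY n m (P : 'M[R]_(n, m)) : 'M[R]_(n, m) :=
  \matrix_(i, j) (P i j / margY P j 0).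

Definition is_svd n m (A : 'M[R]_(n, m)) (U : 'M[R]_n) (S : 'M[R]_(n, m))
  (V : 'M[R]_m) : Prop :=
  [/\ U *m U^T = 1%:M /\ U^T *m U = 1%:M, V *m V^T = 1%:M /\ V^T *m V = 1%:M,
      (forall (i : 'I_n) (j : 'I_m), (i : nat) <> (j : nat) -> S i j = 0),
      (forall (i : 'I_n) (j : 'I_m), (i : nat) = (j : nat) -> 0 <= S i j)
    & A = U *m S *m V^T].

(* Joint pmf of (X,Y,U) as a function on X x Y x U. *)
Definition margU n m p (Q : 'I_n -> 'I_m -> 'I_p -> R) (u : 'I_p) : R :=
  \sum_x \sum_y Q x y u.
Definition margYU n m p (Q : 'I_n -> 'I_m -> 'I_p -> R) (y : 'I_m) (u : 'I_p) : R :=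
  \sum_x Q x y u.
Definition condXgU n m p (Q : 'I_n -> 'I_m -> 'I_p -> R) (u : 'I_p) : 'cV[R]_n :=
  \col_x ((\sum_y Q x y u) / margU Q u).
Definition condYgU n m p (Q : 'I_n -> 'I_m -> 'I_p -> R) (u : 'I_p) : 'cV[R]_m :=
  \col_y (margYU Q y u / margU Q u).

Definition markov_XYU n m p (P : 'M[R]_(n, m)) (Q : 'I_n -> 'I_m -> 'I_p -> R) : Prop :=
  [/\ (forall x y u, 0 <= Q x y u),
      (forall x y, \sum_u Q x y u = P x y)
    & (forall x y u, Q x y u = P x y * (margYU Q y u / margY P y 0))].

Definition Jvec n m p (P : 'M[R]_(n, m)) (Q : 'I_n -> 'I_m -> 'I_p -> R)
  (eps : R) (u : 'I_p) : 'cV[R]_n :=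
  eps^-1 *: (condXgU Q u - margX P).

Definition propP1 n p (PU : 'I_p -> R) (J : 'I_p -> 'cV[R]_n) : Prop :=
  forall u, 0 < PU u -> \sum_x J u x 0 = 0.
Definition propP2 n p (PU : 'I_p -> R) (J : 'I_p -> 'cV[R]_n) : Prop :=
  forall x, \sum_(u | 0 < PU u) PU u * J u x 0 = 0.
Definition propP3 n p (PU : 'I_p -> R) (J : 'I_p -> 'cV[R]_n) : Prop :=
  forall u, 0 < PU u -> \sum_x `|J u x 0| <= 1.

(* The polytope S_u = { y : M y = M P_Y + eps M [P1^{-1} J; 0], y >= 0 },
   |Y| = n + k, P1 = first n columns of P_{X|Y}. *)
Definition polytopeS n k (M : 'M[R]_(n, n + k)) (PY : 'cV[R]_(n + k))
  (P1 : 'M[R]_n) (eps : R) (J : 'cV[R]_n) : pred 'cV[R]_(n + k) :=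
  fun y => (M *m y == M *m PY + eps *: (M *m col_mx (invmx P1 *m J) (0 : 'cV[R]_k)))
           && [forall j, 0 <= y j 0].

End Defs.

From HB Require Import structures.
From mathcomp Require Import all_boot all_order all_algebra.
From mathcomp Require Import ring.
Import Order.TTheory GRing.Theory Num.Theory.
Local Open Scope ring_scope.

Set Implicit Arguments.
Unset Strict Implicit.
Unset Printing Implicit Defensive.

(* Since the Sigma of an SVD of the n x (n + k) matrix A = P_{X|Y} vanishes
   outside its left n x n block, A factors as B M with B square and M the top
   n rows of V^T; full row rank makes B invertible, so A and M have the same
   kernel.  The Markov chain gives A P_{Y|U=u} = P_{X|U=u} = P_X + eps J_u,
   and A [P1^{-1} J_u; 0] = J_u, so P_{Y|U=u} - P_Y - eps [P1^{-1} J_u; 0] lies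
   in the kernel of A, hence of M.  Nonnegativity of P_{Y|U=u} is automatic. *)

Section Polytope.
Variable R : realFieldType.

Lemma mulmx_full_rank_ker n m (B : 'M[R]_n) (C : 'M[R]_(n, m)) (z : 'cV[R]_m) :
  \rank (B *m C) = n -> B *m C *m z = 0 -> C *m z = 0.
Proof.
move=> rkBC BCz0.
have B_unit : B \in unitmx.
  by rewrite -row_free_unit -row_leq_rank -{1}rkBC mxrankM_maxl.
by rewrite -(mulKmx B_unit (C *m z)) [B *m _]mulmxA BCz0 mulmx0.
Qed.

Lemma rsubmx_rect_diag n k (S : 'M[R]_(n, n + k)) :
  (forall (i : 'I_n) (j : 'I_(n + k)), (i : nat) <> (j : nat) -> S i j = 0) ->
  rsubmx S = 0.
Proof.
move=> S_diag; apply/matrixP => i j; rewrite !mxE S_diag //= => i_eq.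
by have := ltn_ord i; rewrite i_eq -ltn_subRL subnn.
Qed.

Lemma svd_full_row_rank_ker n k (A : 'M[R]_(n, n + k)) (U : 'M[R]_n)
  (S : 'M[R]_(n, n + k)) (V : 'M[R]_(n + k)) (z : 'cV[R]_(n + k)) :
  is_svd A U S V -> \rank A = n -> A *m z = 0 ->
  usubmx (V^T : 'M[R]_(n + k, n + k)) *m z = 0.
Proof.
case=> _ _ S_diag _ ->.
have -> : U *m S *m V^T = U *m lsubmx S *m usubmx (V^T : 'M_(n + k, n + k)).
  rewrite -{1}[S]hsubmxK rsubmx_rect_diag // -{1}[V^T]vsubmxK.
  by rewrite -mulmxA mul_row_col mul0mx addr0 mulmxA.
exact: mulmx_full_rank_ker.
Qed.

Lemma mul_col_mx_invmx_lsubmx n k (A : 'M[R]_(n, n + k)) (J : 'cV[R]_n) :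
  lsubmx A \in unitmx -> A *m col_mx (invmx (lsubmx A) *m J) 0 = J.
Proof.
by move=> A1_unit; rewrite -{1}[A]hsubmxK mul_row_col mulmx0 addr0 mulKVmx.
Qed.

Lemma polytopeS_mem n k (A : 'M[R]_(n, n + k)) (U : 'M[R]_n)
  (S : 'M[R]_(n, n + k)) (V : 'M[R]_(n + k)) (PY y : 'cV[R]_(n + k))
  (eps : R) (J : 'cV[R]_n) :
  is_svd A U S V -> \rank A = n -> lsubmx A \in unitmx ->
  A *m y = A *m PY + eps *: J -> (forall j, 0 <= y j 0) ->
  polytopeS (usubmx (V^T : 'M[R]_(n + k, n + k))) PY (lsubmx A) eps J y.
Proof.
move=> svdA rkA A1_unit Ay y_ge0.
set c := col_mx (invmx (lsubmx A) *m J) (0 : 'cV[R]_k).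
have Ac : A *m c = J by exact: mul_col_mx_invmx_lsubmx.
have Mz0 : usubmx (V^T : 'M_(n + k, n + k)) *m (y - PY - eps *: c) = 0.
  apply: (svd_full_row_rank_ker svdA rkA).
  by rewrite !mulmxBr -scalemxAr Ac Ay addrAC addrK subrr.
apply/andP; split; last exact/forallP.
move/eqP: Mz0; rewrite !mulmxBr -scalemxAr subr_eq0 subr_eq => /eqP ->.
by rewrite addrC.
Qed.

End Polytope.

Section Markov.
Variable R : realFieldType.
Variables n m p : nat.
Implicit Types (P : 'M[R]_(n, m)) (Q : 'I_n -> 'I_m -> 'I_p -> R).

Lemma condXgY_margY P :
  (forall y, 0 < margY P y 0) -> condXgY P *m margY P = margX P.
Proof.
move=> PY_gt0; apply/matrixP => x i; rewrite (ord1 i) !mxE.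
apply: eq_bigr => y _; have := PY_gt0 y; rewrite !mxE => /gt_eqF PYy_neq0.
by rewrite divfK ?PYy_neq0.
Qed.

Lemma condXgY_condYgU P Q u :
  markov_XYU P Q -> condXgY P *m condYgU Q u = condXgU Q u.
Proof.
case=> _ _ QM; apply/matrixP => x i; rewrite (ord1 i) !mxE mulr_suml.
by apply: eq_bigr => y _; rewrite !mxE QM mxE; ring.
Qed.

Lemma condYgU_ge0 Q u y : (forall x y u, 0 <= Q x y u) -> 0 <= condYgU Q u y 0.
Proof.
move=> Q_ge0; rewrite mxE divr_ge0 ?sumr_ge0 // => x _.
exact: sumr_ge0.
Qed.

Lemma scale_Jvec P Q eps u :
  eps != 0 -> eps *: Jvec P Q eps u = condXgU Q u - margX P.
Proof. by move=> eps_neq0; rewrite scalerA mulfV // scale1r. Qed.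

End Markov.

Theorem lemma2 (R : realFieldType) (n k : nat) (PXY : 'M[R]_(n, n + k))
  (Hn : (0 < n)%N) (Hk : (0 < k)%N)
  (Hpmf : is_joint_pmf PXY)
  (HPX : forall x, 0 < margX PXY x 0)
  (HPY : forall y, 0 < margY PXY y 0)
  (Hrank : \rank (condXgY PXY) = n)
  (HP1 : lsubmx (condXgY PXY) \in unitmx)
  (Uo : 'M[R]_n) (Sg : 'M[R]_(n, n + k)) (V : 'M[R]_(n + k))
  (Hsvd : is_svd (condXgY PXY) Uo Sg V) :
  let M : 'M[R]_(n, n + k) := usubmx (V^T : 'M[R]_(n + k, n + k)) in
  exists eps0 : R, 0 < eps0 /\
    forall eps : R, 0 < eps -> eps < eps0 ->
    forall (p : nat) (Q : 'I_n -> 'I_(n + k) -> 'I_p -> R),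
      markov_XYU PXY Q ->
      propP1 (margU Q) (Jvec PXY Q eps) ->
      propP2 (margU Q) (Jvec PXY Q eps) ->
      propP3 (margU Q) (Jvec PXY Q eps) ->
      forall u : 'I_p, 0 < margU Q u ->
        polytopeS M (margY PXY) (lsubmx (condXgY PXY)) eps (Jvec PXY Q eps u)
          (condYgU Q u).
Proof.
(* Membership holds for every eps > 0. *)
move=> M; exists 1; split => // eps eps_gt0 _ p Q markovQ _ _ _ u _.
have [Q_ge0 _ _] := markovQ.
apply: (polytopeS_mem Hsvd Hrank HP1) => [|y]; last exact: condYgU_ge0.
rewrite condXgY_condYgU // condXgY_margY // scale_Jvec ?gt_eqF //.
by rewrite addrC subrK.
Qed.
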